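(* In the discrete setting of the context, consider the semi-discrete scheme with free-surface penalty terms $$\widetilde{\mathbf{P}}^{-1}\frac{d\mathbf{Q}}{dt}=\sum_{\xi}D_{-\xi}\,\mathbf{F}_\xi(\mathbf{Q})+\sum_{\xi}\mathbf{B}^h_\xi(\mathbf{Q})+\sum_{\xi}\big(\mathbf{SAT}_{\xi,0}+\mathbf{SAT}_{\xi,n_\xi}\big),$$ where, for each $\xi\in\{q,r,s\}$, $\mathbf{SAT}_{\xi,0}$ vanishes except at grid points with $\xi$-index $0$, where it equals $\frac{1}{h^{(\xi)}_0}J\sqrt{\xi_x^2+\xi_y^2+\xi_z^2}\,(T_x,T_y,T_z,0,0,0,0,0,0)^T$, and $\mathbf{SAT}_{\xi,n_\xi}$ vanishes except at grid points with $\xi$-index $n_\xi$, where it equals $-\frac{1}{h^{(\xi)}_{n_\xi}}J\sqrt{\xi_x^2+\xi_y^2+\xi_z^2}\,(T_x,T_y,T_z,0,0,0,0,0,0)^T$; here $\mathbf{T}=\boldsymbol\sigma_{\mathrm{mat}}\mathbf{n}$, $\mathbf{n}=(\xi_x,\xi_y,\xi_z)^T/\sqrt{\xi_x^2+\xi_y^2+\xi_z^2}$ (so $J\sqrt{\xi_x^2+\xi_y^2+\xi_z^2}\,\mathbf{T}$ equals the first three entries of $\mathbf{F}_\xi(\mathbf{Q})$). Then every differentiable solution satisfies $\dfrac{dE_h}{dt}=0$.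
   Context: Discrete setting: for $\xi\in\{q,r,s\}$ fix $n_\xi\ge1$, a diagonal matrix $H_\xi=\mathrm{diag}(h^{(\xi)}_0,\dots,h^{(\xi)}_{n_\xi})$ with positive entries, and real $(n_\xi+1)\times(n_\xi+1)$ matrices $D_{+\xi},D_{-\xi}$ with $(D_{+\xi}f)^TH_\xi g+f^TH_\xi(D_{-\xi}g)=f_{n_\xi}g_{n_\xi}-f_0g_0$ for all $f,g\in\mathbb{R}^{n_\xi+1}$. A 3D grid function $f=(f_{ijk})$ has $0\le i\le n_q$, $0\le j\le n_r$, $0\le k\le n_s$; $D_{\pm q}$ acts on the index $i$, i.e. $(D_{\pm q}f)_{ijk}=\sum_{i'}(D_{\pm q})_{ii'}f_{i'jk}$, and similarly $D_{\pm r}$ on $j$ and $D_{\pm s}$ on $k$; applied to vector-valued grid functions they act componentwise. Given are grid functions $J_{ijk}>0$, for each $\xi$ metric values $(\xi_x,\xi_y,\xi_z)_{ijk}\in\mathbb{R}^3\setminus\{0\}$, density $\rho_{ijk}>0$ and symmetric positive definite $6\times6$ compliance matrices $\mathbf{S}_{ijk}$; $\widetilde{\mathbf{P}}^{-1}_{ijk}=J_{ijk}\,\mathrm{diag}(\rho_{ijk}I_3,\mathbf{S}_{ijk})$. The unknown is $\mathbf{Q}_{ijk}=(\mathbf{v},\boldsymbol\sigma)_{ijk}$ with $\mathbf{v}=(v_x,v_y,v_z)$, $\boldsymbol\sigma=(\sigma_{xx},\sigma_{yy},\sigma_{zz},\sigma_{xy},\sigma_{xz},\sigma_{yz})$, and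 $\boldsymbol\sigma_{\mathrm{mat}}$ the symmetric $3\times3$ stress matrix. Pointwise flux: $\mathbf{F}_\xi(\mathbf{Q})$ has first three entries $J(\xi_x\sigma_{xx}+\xi_y\sigma_{xy}+\xi_z\sigma_{xz})$, $J(\xi_x\sigma_{xy}+\xi_y\sigma_{yy}+\xi_z\sigma_{yz})$, $J(\xi_x\sigma_{xz}+\xi_y\sigma_{yz}+\xi_z\sigma_{zz})$ and last six entries $0$. Discrete non-conservative term: with $w_\alpha=D_{+\xi}v_\alpha$, $\mathbf{B}^h_\xi(\mathbf{Q})$ has first three entries $0$ and entries 4–9 equal to $J\xi_xw_x$, $J\xi_yw_y$, $J\xi_zw_z$, $J(\xi_yw_x+\xi_xw_y)$, $J(\xi_zw_x+\xi_xw_z)$, $J(\xi_zw_y+\xi_yw_z)$. Discrete energy: $E_h=\frac12\sum_{i,j,k}h^{(q)}_ih^{(r)}_jh^{(s)}_k\,\mathbf{Q}_{ijk}^T\widetilde{\mathbf{P}}^{-1}_{ijk}\mathbf{Q}_{ijk}$. *)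

From HB Require Import structures.
From mathcomp Require Import all_boot all_order all_algebra.
From mathcomp Require Import reals topology normedtype derive.
Set Implicit Arguments. Unset Strict Implicit. Unset Printing Implicit Defensive.
Import Order.TTheory GRing.Theory Num.Theory.
Import numFieldNormedType.Exports.
Local Open Scope ring_scope.

Section Defs.
Variable R : realType.

Definition SBP (n : nat) (h : 'I_n.+1 -> R) (Dp Dm : 'M[R]_n.+1) : Prop :=
  (forall i, 0 < h i) /\
  forall f g : 'cV[R]_n.+1,
    ((Dp *m f)^T *m diag_mx (\row_i h i) *m g) 0 0
    + (f^T *m diag_mx (\row_i h i) *m (Dm *m g)) 0 0
    = f ord_max 0 * g ord_max 0 - f ord0 0 * g ord0 0.

(* Pointwise state Q = (vx,vy,vz,sxx,syy,szz,sxy,sxz,syz) as a column 'cV_9.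
   Index of the stress component sigma_{ab} in Q. *)
Definition voigt (a b : 'I_3) : nat :=
  match nat_of_ord a, nat_of_ord b with
  | 0, 0 => 3 | 1, 1 => 4 | 2, 2 => 5
  | 0, 1 | 1, 0 => 6
  | 0, 2 | 2, 0 => 7
  | _, _ => 8
  end.

Definition smat (Qp : 'cV[R]_9) : 'M[R]_3 :=
  \matrix_(a, b) Qp (inord (voigt a b)) 0.

Definition Qc (Qp : 'cV[R]_9) (c : nat) : R := Qp (inord c) 0.

Definition fluxpt (J mx my mz : R) (Qp : 'cV[R]_9) : 'cV[R]_9 :=
  \col_c match nat_of_ord c with
    | 0 => J * (mx * Qc Qp 3 + my * Qc Qp 6 + mz * Qc Qp 7)
    | 1 => J * (mx * Qc Qp 6 + my * Qc Qp 4 + mz * Qc Qp 8)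
    | 2 => J * (mx * Qc Qp 7 + my * Qc Qp 8 + mz * Qc Qp 5)
    | _ => 0
    end.

(* pointwise non-conservative term B^h_xi given w = D_{+xi} v at the point *)
Definition Bpt (J mx my mz : R) (w : 'cV[R]_3) : 'cV[R]_9 :=
  let wx := w 0 0 in let wy := w 1 0 in let wz := w 2%:R 0 in
  \col_c match nat_of_ord c with
    | 3 => J * mx * wx
    | 4 => J * my * wy
    | 5 => J * mz * wz
    | 6 => J * (my * wx + mx * wy)
    | 7 => J * (mz * wx + mx * wz)
    | 8 => J * (mz * wy + my * wz)
    | _ => 0
    end.

Definition tractpt (J mx my mz : R) (Qp : 'cV[R]_9) : 'cV[R]_9 :=
  let nrm := Num.sqrt (mx ^+ 2 + my ^+ 2 + mz ^+ 2) in
  let nv : 'cV[R]_3 := nrm^-1 *: \col_a [:: mx; my; mz]`_a in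
  let T := smat Qp *m nv in
  \col_c (if (nat_of_ord c < 3)%N then J * nrm * T (inord c) 0 else 0).

Definition Ptinv (J rho : R) (S : 'M[R]_6) : 'M[R]_9 :=
  J *: (block_mx (rho%:M : 'M[R]_3) 0 0 S : 'M[R]_(3 + 6)).

Definition spd (m : nat) (S : 'M[R]_m) : Prop :=
  S^T = S /\ forall x : 'cV[R]_m, x != 0 -> 0 < (x^T *m S *m x) 0 0.

Variables (nq nr ns : nat).
Notation gridfun T := ('I_nq.+1 -> 'I_nr.+1 -> 'I_ns.+1 -> T).

Definition velpt (Qp : 'cV[R]_9) : 'cV[R]_3 := \col_a Qp (inord a) 0.

Definition rhs
  (hq : 'I_nq.+1 -> R) (hr : 'I_nr.+1 -> R) (hs : 'I_ns.+1 -> R)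
  (Dpq Dmq : 'M[R]_nq.+1) (Dpr Dmr : 'M[R]_nr.+1) (Dps Dms : 'M[R]_ns.+1)
  (J qx qy qz rx ry rz sx sy sz : gridfun R)
  (Q : gridfun 'cV[R]_9) (i : 'I_nq.+1) (j : 'I_nr.+1) (k : 'I_ns.+1)
  : 'cV[R]_9 :=
    \sum_(i' < nq.+1) Dmq i i' *: fluxpt (J i' j k) (qx i' j k) (qy i' j k) (qz i' j k) (Q i' j k)
  + \sum_(j' < nr.+1) Dmr j j' *: fluxpt (J i j' k) (rx i j' k) (ry i j' k) (rz i j' k) (Q i j' k)
  + \sum_(k' < ns.+1) Dms k k' *: fluxpt (J i j k') (sx i j k') (sy i j k') (sz i j k') (Q i j k')
  + Bpt (J i j k) (qx i j k) (qy i j k) (qz i j k)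
        (\sum_(i' < nq.+1) Dpq i i' *: velpt (Q i' j k))
  + Bpt (J i j k) (rx i j k) (ry i j k) (rz i j k)
        (\sum_(j' < nr.+1) Dpr j j' *: velpt (Q i j' k))
  + Bpt (J i j k) (sx i j k) (sy i j k) (sz i j k)
        (\sum_(k' < ns.+1) Dps k k' *: velpt (Q i j k'))
  + ((if i == ord0 then (hq ord0)^-1 *:
        tractpt (J i j k) (qx i j k) (qy i j k) (qz i j k) (Q i j k) else 0)
     + (if i == ord_max then - (hq ord_max)^-1 *:
        tractpt (J i j k) (qx i j k) (qy i j k) (qz i j k) (Q i j k) else 0))
  + ((if j == ord0 then (hr ord0)^-1 *:
        tractpt (J i j k) (rx i j k) (ry i j k) (rz i j k) (Q i j k) else 0)
     + (if j == ord_max then - (hr ord_max)^-1 *: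
        tractpt (J i j k) (rx i j k) (ry i j k) (rz i j k) (Q i j k) else 0))
  + ((if k == ord0 then (hs ord0)^-1 *:
        tractpt (J i j k) (sx i j k) (sy i j k) (sz i j k) (Q i j k) else 0)
     + (if k == ord_max then - (hs ord_max)^-1 *:
        tractpt (J i j k) (sx i j k) (sy i j k) (sz i j k) (Q i j k) else 0)).

Definition energy
  (hq : 'I_nq.+1 -> R) (hr : 'I_nr.+1 -> R) (hs : 'I_ns.+1 -> R)
  (J rho : gridfun R) (S : gridfun 'M[R]_6) (Q : gridfun 'cV[R]_9) : R :=
  2^-1 * \sum_(i < nq.+1) \sum_(j < nr.+1) \sum_(k < ns.+1)
    hq i * hr j * hs k *
    ((Q i j k)^T *m Ptinv (J i j k) (rho i j k) (S i j k) *m Q i j k) 0 0.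

End Defs.

(* Write x . y for the Euclidean dot product of column vectors.  Since the
   weight matrix P~^{-1} = J diag(rho I_3, S) is symmetric,
     dE_h/dt = sum_{ijk} h_i h_j h_k  Q_{ijk} . (P~^{-1} dQ_{ijk}/dt)
             = sum_{ijk} h_i h_j h_k  Q_{ijk} . rhs_{ijk}.
   Pointwise, Q . rhs splits into one "line term" per direction xi, because
   (a) the flux F_xi(Q) only has velocity components,
   (b) Q . B^h_xi(w) = (velocity part of F_xi(Q)) . w  (B^h is the adjoint
       of the flux, seen as a map from velocities to stresses),
   (c) the traction penalty J |grad xi| T equals the velocity part of F_xi(Q).
   Each line term has the form v.(D_- F) + F.(D_+ v) + boundary penalties,
   and its H-weighted sum along a grid line vanishes by the SBP property,
   the penalties cancelling exactly the boundary terms f_n g_n - f_0 g_0. *)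

From HB Require Import structures.
From mathcomp Require Import all_boot all_order all_algebra.
From mathcomp Require Import reals topology normedtype derive.
From mathcomp Require Import boolp functions zify.
From mathcomp.algebra_tactics Require Import ring lra.
Import Order.TTheory GRing.Theory Num.Theory.
Import numFieldNormedType.Exports.
Local Open Scope ring_scope.
Set Implicit Arguments. Unset Strict Implicit.

Section Calculus.
Variable R : realType.

Lemma is_derive_bigsum n (g : 'I_n -> R -> R) (x : R) (dg : 'I_n -> R) :
  (forall i, is_derive x 1 (g i) (dg i)) ->
  is_derive x 1 (fun s => \sum_(i < n) g i s) (\sum_(i < n) dg i).
Proof. by move=> Hg; rewrite -fct_sumE; apply: is_derive_sum. Qed.

Lemma is_derive_mulr (f g : R -> R) (x df dg : R) :
  is_derive x 1 f df -> is_derive x 1 g dg ->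
  is_derive x 1 (fun s => f s * g s) (df * g x + f x * dg).
Proof.
move=> Hf Hg; have -> : df * g x + f x * dg = f x *: dg + g x *: df.
  by rewrite /GRing.scale /= mulrC addrC.
exact: is_deriveM.
Qed.

Lemma is_derive_cmul (f : R -> R) (c x df : R) :
  is_derive x 1 f df -> is_derive x 1 (fun s => c * f s) (c * df).
Proof. exact: is_deriveZ. Qed.

Lemma is_derive_mulrc (f : R -> R) (c x df : R) :
  is_derive x 1 f df -> is_derive x 1 (fun s => f s * c) (df * c).
Proof.
move=> Hf; rewrite (_ : (fun s => f s * c) = (fun s => c * f s)).
  by rewrite mulrC; apply: is_derive_cmul.
by apply: funext => s; rewrite mulrC.
Qed.

Lemma quad_formE m (P : 'M[R]_m) (v w : 'cV[R]_m) :
  (v^T *m P *m w) 0 0 = \sum_(d < m) (\sum_(c < m) v c 0 * P c d) * w d 0.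
Proof.
rewrite mxE; apply: eq_bigr => d _; rewrite mxE; congr (_ * _).
by apply: eq_bigr => c _; rewrite mxE.
Qed.

Lemma is_derive_quad_form m (q : R -> 'cV[R]_m) (P : 'M[R]_m) (x : R)
    (dq : 'cV[R]_m) :
  P^T = P -> (forall c, is_derive x 1 (fun s => q s c 0) (dq c 0)) ->
  is_derive x 1 (fun s => ((q s)^T *m P *m q s) 0 0)
    (2 * ((q x)^T *m P *m dq) 0 0).
Proof.
move=> P_sym Hq.
rewrite (_ : (fun s => _) =
  (fun s => \sum_(d < m) (\sum_(c < m) q s c 0 * P c d) * q s d 0)); last first.
  by apply: funext => s; rewrite quad_formE.
have Hrow d : is_derive x 1 (fun s => \sum_(c < m) q s c 0 * P c d)
                         (\sum_(c < m) dq c 0 * P c d).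
  exact: is_derive_bigsum (fun c => is_derive_mulrc (P c d) (Hq c)).
apply: is_derive_eq.
  exact: is_derive_bigsum (fun d => is_derive_mulr (Hrow d) (Hq d)).
rewrite quad_formE big_split /= mulr2n mulrDl mul1r; congr (_ + _).
rewrite (eq_bigr (fun d => \sum_(c < m) q x d 0 * P d c * dq c 0)); last first.
  move=> d _; rewrite mulr_suml; apply: eq_bigr => c _.
  have -> : P c d = P d c by rewrite -{1}P_sym mxE.
  by rewrite mulrC [dq c 0 * _]mulrC mulrA.
by rewrite exchange_big /=; apply: eq_bigr => c _; rewrite mulr_suml.
Qed.

End Calculus.

Section DotProduct.
Variable R : realType.

Definition dot m (x y : 'cV[R]_m) : R := (x^T *m y) 0 0.

Lemma dotD m (x a b : 'cV[R]_m) : dot x (a + b) = dot x a + dot x b.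
Proof. by rewrite /dot mulmxDr mxE. Qed.

Lemma dotZ m (x a : 'cV[R]_m) c : dot x (c *: a) = c * dot x a.
Proof. by rewrite /dot -scalemxAr mxE. Qed.

Lemma dot_if m (x a : 'cV[R]_m) (b : bool) c :
  dot x (if b then c *: a else 0) = if b then c * dot x a else 0.
Proof. by case: b; rewrite ?dotZ // /dot mulmx0 mxE. Qed.

Lemma dotE m (x y : 'cV[R]_m) : dot x y = \sum_(c < m) x c 0 * y c 0.
Proof. by rewrite /dot mxE; apply: eq_bigr => c _; rewrite mxE. Qed.

Lemma sum_velocity_stress (F : 'I_9 -> R) :
  \sum_(c < 9) F c = \sum_(a < 3) F (inord a) + \sum_(b < 6) F (inord b.+3).
Proof.
rewrite (@big_split_ord _ _ _ 3 6) /=; congr (_ + _); apply: eq_bigr => c _;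
  by congr F; apply: val_inj; rewrite /= inordK //; have := ltn_ord c; lia.
Qed.

Lemma dot_velocity (x y : 'cV[R]_9) :
  (forall c : 'I_9, (3 <= c)%N -> y c 0 = 0) ->
  dot x y = \sum_(a < 3) x (inord a) 0 * y (inord a) 0.
Proof.
move=> y_stress0; rewrite dotE sum_velocity_stress [X in _ + X]big1 ?addr0 //.
by move=> b _; rewrite y_stress0 ?mulr0 // inordK //; have := ltn_ord b; lia.
Qed.

End DotProduct.

Section PointwiseAlgebra.
Variable R : realType.
Implicit Types (J mx my mz : R) (Qp : 'cV[R]_9).

Lemma flux_stress_free J mx my mz Qp (c : 'I_9) :
  (3 <= c)%N -> fluxpt J mx my mz Qp c 0 = 0.
Proof. by case: c => [[|[|[|c]]] Hc] //= _; rewrite mxE. Qed.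

Lemma dot_velocity_sum m x (w : 'I_m -> R) (Fl : 'I_m -> 'cV[R]_9) :
  (forall i (c : 'I_9), (3 <= c)%N -> Fl i c 0 = 0) ->
  dot x (\sum_(i < m) w i *: Fl i)
  = \sum_(a < 3) x (inord a) 0 * \sum_(i < m) w i * Fl i (inord a) 0.
Proof.
move=> Fl_stress0; rewrite dot_velocity => [|c Hc].
  apply: eq_bigr => a _; rewrite summxE; congr (_ * _).
  by apply: eq_bigr => i _; rewrite mxE.
by rewrite summxE big1 // => i _; rewrite mxE Fl_stress0 ?mulr0.
Qed.

Lemma tract_flux J mx my mz Qp :
  (mx, my, mz) != (0, 0, 0) -> tractpt J mx my mz Qp = fluxpt J mx my mz Qp.
Proof.
move=> m_neq0.
have norm2_gt0 : 0 < mx ^+ 2 + my ^+ 2 + mz ^+ 2.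
  rewrite ltNge; apply/negP => Hle; move/negP: m_neq0; apply.
  have := sqr_ge0 mx; have := sqr_ge0 my; have := sqr_ge0 mz => h3 h2 h1.
  have /eqP : mx ^+ 2 = 0 by lra.
  have /eqP : my ^+ 2 = 0 by lra.
  have /eqP : mz ^+ 2 = 0 by lra.
  by rewrite !expf_eq0 /= => /eqP -> /eqP -> /eqP ->.
have : Num.sqrt (mx ^+ 2 + my ^+ 2 + mz ^+ 2) != 0 by rewrite sqrtr_eq0 -ltNge.
set N := Num.sqrt _ => N_neq0.
apply/matrixP => c d; rewrite (ord1 d) !mxE.
case: c => [[|[|[|c]]] Hc] //=;
  rewrite !big_ord_recr big_ord0 /= /smat !mxE /= /voigt /= !inordK //= /Qc;
  by field.
Qed.

Lemma dot_Bpt x J mx my mz (w : 'cV[R]_3) :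
  dot x (Bpt J mx my mz w)
  = \sum_(a < 3) fluxpt J mx my mz x (inord a) 0 * w (inord a) 0.
Proof.
rewrite dotE sum_velocity_stress big1 ?add0r; last first.
  move=> a _; rewrite mxE inordK; last by rewrite (@leq_trans 3) ?ltn_ord.
  by case: a => [[|[|[|a]]] Ha]; rewrite /= ?mulr0.
rewrite !big_ord_recr !big_ord0 /= !mxE /= !inordK //= /Qc.
have [-> -> ->] : [/\ w (inord 0) 0 = w 0 0, w (inord 1) 0 = w 1 0
                     & w (inord 2) 0 = w 2%:R 0].
  by split; congr (w _ 0); apply: val_inj; rewrite /= inordK.
ring.
Qed.

Lemma dot_Bpt_Dvel m x J mx my mz (c : 'I_m -> R) (y : 'I_m -> 'cV[R]_9) :
  dot x (Bpt J mx my mz (\sum_(i' < m) c i' *: velpt (y i')))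
  = \sum_(a < 3) fluxpt J mx my mz x (inord a) 0
                 * \sum_(i' < m) c i' * y i' (inord a) 0.
Proof.
rewrite dot_Bpt; apply: eq_bigr => a _; rewrite summxE; congr (_ * _).
by apply: eq_bigr => i _; rewrite !mxE inord_val.
Qed.

End PointwiseAlgebra.

Section SBPLines.
Variable R : realType.

Lemma SBP_sum n (h : 'I_n.+1 -> R) Dp Dm : SBP h Dp Dm ->
  forall f g : 'I_n.+1 -> R,
  \sum_i h i * (f i * (\sum_i' Dm i i' * g i') + g i * (\sum_i' Dp i i' * f i'))
  = f ord_max * g ord_max - f ord0 * g ord0.
Proof.
have diag_quad (u w : 'cV[R]_n.+1) :
    (u^T *m diag_mx (\row_i h i) *m w) 0 0 = \sum_i u i 0 * h i * w i 0.
  by rewrite mul_mx_diag mxE; apply: eq_bigr => i _; rewrite !mxE.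
move=> [_ sbp] f g; have := sbp (\col_i f i) (\col_i g i).
rewrite !diag_quad !mxE => <-; rewrite -big_split /=; apply: eq_bigr => i _.
rewrite !mxE; under [in RHS]eq_bigr do rewrite mxE.
under [X in _ = _ + _ * _ * X]eq_bigr do rewrite mxE.
ring.
Qed.

(* The contribution to Q . rhs of the direction with SBP pair (Dp, Dm) and
   weights h, for a line of velocities V and fluxes F with m components:
   V.(D_- F) + F.(D_+ V) plus the two boundary penalty terms. *)
Definition line_term n m (h : 'I_n.+1 -> R) (Dp Dm : 'M[R]_n.+1)
    (V F : 'I_m -> 'I_n.+1 -> R) (i : 'I_n.+1) : R :=
  \sum_(a < m) V a i * (\sum_(i' < n.+1) Dm i i' * F a i')
  + \sum_(a < m) F a i * (\sum_(i' < n.+1) Dp i i' * V a i')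
  + (if i == ord0 then (h ord0)^-1 * \sum_(a < m) V a i * F a i else 0)
  + (if i == ord_max then - (h ord_max)^-1 * \sum_(a < m) V a i * F a i else 0).

(* Along a grid line the penalties cancel the SBP boundary terms exactly. *)
Lemma line_term_sum_eq0 n m (h : 'I_n.+1 -> R) Dp Dm (V F : 'I_m -> 'I_n.+1 -> R) :
  SBP h Dp Dm -> \sum_i h i * line_term h Dp Dm V F i = 0.
Proof.
move=> sbp; have [h_gt0 _] := sbp.
set VF := fun i => \sum_(a < m) V a i * F a i.
have interior :
  \sum_i h i * \sum_(a < m) V a i * (\sum_(i' < n.+1) Dm i i' * F a i')
  + \sum_i h i * \sum_(a < m) F a i * (\sum_(i' < n.+1) Dp i i' * V a i')
  = VF ord_max - VF ord0.
  rewrite -big_split /= /VF -sumrB.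
  under eq_bigr do rewrite -mulrDr -big_split mulr_sumr.
  by rewrite exchange_big; apply: eq_bigr => a _; apply: SBP_sum.
have left_penalty :
  \sum_i h i * (if i == ord0 then (h ord0)^-1 * VF i else 0) = VF ord0.
  rewrite (bigD1 ord0) //= ?eqxx big1 ?addr0 => [|i /negbTE -> ]; last by rewrite mulr0.
  by rewrite mulrA mulfV ?mul1r // gt_eqF.
have right_penalty :
  \sum_i h i * (if i == ord_max then - (h ord_max)^-1 * VF i else 0) = - VF ord_max.
  rewrite (bigD1 ord_max) //= ?eqxx big1 ?addr0 => [|i /negbTE -> ]; last by rewrite mulr0.
  by rewrite mulNr mulrN mulrA mulfV ?mul1r // gt_eqF.
under eq_bigr do rewrite !mulrDr.
rewrite !big_split /= interior left_penalty right_penalty.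
by rewrite subrK subrr.
Qed.

End SBPLines.

Section GridSums.
Variable R : realType.
Variables (a b c : nat) (h1 : 'I_a -> R) (h2 : 'I_b -> R) (h3 : 'I_c -> R).
Implicit Type F : 'I_a -> 'I_b -> 'I_c -> R.

Lemma grid_sum_eq0_lines1 F :
  (forall j k, \sum_i h1 i * F i j k = 0) ->
  \sum_i \sum_j \sum_k h1 i * h2 j * h3 k * F i j k = 0.
Proof.
move=> lines0; rewrite exchange_big big1 // => j _; rewrite exchange_big big1 // => k _.
rewrite (eq_bigr (fun i => h2 j * h3 k * (h1 i * F i j k))) => [|i _]; last by ring.
by rewrite -mulr_sumr lines0 mulr0.
Qed.

Lemma grid_sum_eq0_lines2 F :
  (forall i k, \sum_j h2 j * F i j k = 0) ->
  \sum_i \sum_j \sum_k h1 i * h2 j * h3 k * F i j k = 0.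
Proof.
move=> lines0; rewrite big1 // => i _; rewrite exchange_big big1 // => k _.
rewrite (eq_bigr (fun j => h1 i * h3 k * (h2 j * F i j k))) => [|j _]; last by ring.
by rewrite -mulr_sumr lines0 mulr0.
Qed.

Lemma grid_sum_eq0_lines3 F :
  (forall i j, \sum_k h3 k * F i j k = 0) ->
  \sum_i \sum_j \sum_k h1 i * h2 j * h3 k * F i j k = 0.
Proof.
move=> lines0; rewrite big1 // => i _; rewrite big1 // => j _.
under eq_bigr do rewrite -mulrA.
by rewrite -mulr_sumr lines0 mulr0.
Qed.

Lemma grid_sumD (F G : 'I_a -> 'I_b -> 'I_c -> R) :
  \sum_i \sum_j \sum_k (F i j k + G i j k)
  = \sum_i \sum_j \sum_k F i j k + \sum_i \sum_j \sum_k G i j k.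
Proof.
rewrite -big_split; apply: eq_bigr => i _; rewrite -big_split.
by apply: eq_bigr => j _; rewrite -big_split.
Qed.

End GridSums.

Section EnergyBalance.
Variable R : realType.
Variables (nq nr ns : nat).
Notation gridfun T := ('I_nq.+1 -> 'I_nr.+1 -> 'I_ns.+1 -> T).
Variables (hq : 'I_nq.+1 -> R) (hr : 'I_nr.+1 -> R) (hs : 'I_ns.+1 -> R).
Variables (Dpq Dmq : 'M[R]_nq.+1) (Dpr Dmr : 'M[R]_nr.+1) (Dps Dms : 'M[R]_ns.+1).
Variables (J qx qy qz rx ry rz sx sy sz : gridfun R).
Hypothesis q_neq0 : forall i j k, (qx i j k, qy i j k, qz i j k) != (0, 0, 0).
Hypothesis r_neq0 : forall i j k, (rx i j k, ry i j k, rz i j k) != (0, 0, 0).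
Hypothesis s_neq0 : forall i j k, (sx i j k, sy i j k, sz i j k) != (0, 0, 0).

Lemma regroup_by_direction (a1 a2 a3 b1 b2 b3 c1 c2 c3 c4 c5 c6 : R) :
  a1 + a2 + a3 + b1 + b2 + b3 + (c1 + c2) + (c3 + c4) + (c5 + c6)
  = a1 + b1 + c1 + c2 + (a2 + b2 + c3 + c4) + (a3 + b3 + c5 + c6).
Proof. ring. Qed.

Lemma dot_rhs_line_terms (G : gridfun 'cV[R]_9) i j k :
  dot (G i j k) (rhs hq hr hs Dpq Dmq Dpr Dmr Dps Dms J qx qy qz rx ry rz sx sy sz G i j k)
  = line_term hq Dpq Dmq (fun (a : 'I_3) i' => G i' j k (inord a) 0)
      (fun (a : 'I_3) i' => fluxpt (J i' j k) (qx i' j k) (qy i' j k) (qz i' j k) (G i' j k) (inord a) 0) i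
  + line_term hr Dpr Dmr (fun (a : 'I_3) j' => G i j' k (inord a) 0)
      (fun (a : 'I_3) j' => fluxpt (J i j' k) (rx i j' k) (ry i j' k) (rz i j' k) (G i j' k) (inord a) 0) j
  + line_term hs Dps Dms (fun (a : 'I_3) k' => G i j k' (inord a) 0)
      (fun (a : 'I_3) k' => fluxpt (J i j k') (sx i j k') (sy i j k') (sz i j k') (G i j k') (inord a) 0) k.
Proof.
rewrite /rhs !dotD !dot_velocity_sum => [|*|*|*]; try exact: flux_stress_free.
rewrite !dot_if !dot_Bpt_Dvel !tract_flux // !(dot_velocity _ (flux_stress_free _ _ _ _ _)).
exact: regroup_by_direction.
Qed.

Hypotheses (sbp_q : SBP hq Dpq Dmq) (sbp_r : SBP hr Dpr Dmr) (sbp_s : SBP hs Dps Dms).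

Lemma rhs_energy_neutral (G : gridfun 'cV[R]_9) :
  \sum_i \sum_j \sum_k hq i * hr j * hs k *
    dot (G i j k) (rhs hq hr hs Dpq Dmq Dpr Dmr Dps Dms J qx qy qz rx ry rz sx sy sz G i j k)
  = 0.
Proof.
under eq_bigr do under eq_bigr do under eq_bigr do rewrite dot_rhs_line_terms 2!mulrDr.
rewrite !grid_sumD grid_sum_eq0_lines1 => [|j k]; last exact: line_term_sum_eq0.
rewrite grid_sum_eq0_lines2 => [|i k]; last exact: line_term_sum_eq0.
rewrite grid_sum_eq0_lines3 => [|i j]; last exact: line_term_sum_eq0.
by rewrite !addr0.
Qed.

End EnergyBalance.

Section EnergyRate.
Variable R : realType.

Lemma Ptinv_sym (J rho : R) (S : 'M[R]_6) :
  S^T = S -> (Ptinv J rho S)^T = Ptinv J rho S.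
Proof.
move=> S_sym; rewrite /Ptinv linearZ /=; congr (_ *: _).
by have := tr_block_mx (rho%:M : 'M[R]_3) 0 0 S; rewrite !trmx0 tr_scalar_mx S_sym.
Qed.

Lemma is_derive_energy nq nr ns (hq : 'I_nq.+1 -> R) (hr : 'I_nr.+1 -> R)
    (hs : 'I_ns.+1 -> R) (J rho : 'I_nq.+1 -> 'I_nr.+1 -> 'I_ns.+1 -> R)
    (S : 'I_nq.+1 -> 'I_nr.+1 -> 'I_ns.+1 -> 'M[R]_6)
    (Q : R -> 'I_nq.+1 -> 'I_nr.+1 -> 'I_ns.+1 -> 'cV[R]_9)
    (dQ : 'I_nq.+1 -> 'I_nr.+1 -> 'I_ns.+1 -> 'cV[R]_9) (t : R) :
  (forall i j k, (S i j k)^T = S i j k) ->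
  (forall i j k c, is_derive t 1 (fun s => Q s i j k c 0) (dQ i j k c 0)) ->
  is_derive t 1 (fun s => energy hq hr hs J rho S (Q s))
    (\sum_i \sum_j \sum_k hq i * hr j * hs k *
       dot (Q t i j k) (Ptinv (J i j k) (rho i j k) (S i j k) *m dQ i j k)).
Proof.
move=> S_sym dQ_spec; apply: is_derive_eq.
  exact: is_derive_cmul (is_derive_bigsum (fun i => is_derive_bigsum (fun j =>
    is_derive_bigsum (fun k => is_derive_cmul (hq i * hr j * hs k)
      (is_derive_quad_form (Ptinv_sym (J i j k) (rho i j k) (S_sym i j k))
         (dQ_spec i j k)))))).
rewrite mulr_sumr; apply: eq_bigr => i _; rewrite mulr_sumr; apply: eq_bigr => j _.
rewrite mulr_sumr; apply: eq_bigr => k _.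
by rewrite /dot mulmxA mulrCA mulKf ?pnatr_eq0.
Qed.

End EnergyRate.

Theorem theorem5p1 (R : realType) (nq nr ns : nat)
  (hq : 'I_nq.+1 -> R) (hr : 'I_nr.+1 -> R) (hs : 'I_ns.+1 -> R)
  (Dpq Dmq : 'M[R]_nq.+1) (Dpr Dmr : 'M[R]_nr.+1) (Dps Dms : 'M[R]_ns.+1)
  (J qx qy qz rx ry rz sx sy sz rho : 'I_nq.+1 -> 'I_nr.+1 -> 'I_ns.+1 -> R)
  (S : 'I_nq.+1 -> 'I_nr.+1 -> 'I_ns.+1 -> 'M[R]_6)
  (Q : R -> 'I_nq.+1 -> 'I_nr.+1 -> 'I_ns.+1 -> 'cV[R]_9) :
  (1 <= nq)%N -> (1 <= nr)%N -> (1 <= ns)%N ->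
  SBP hq Dpq Dmq -> SBP hr Dpr Dmr -> SBP hs Dps Dms ->
  (forall i j k, 0 < J i j k) ->
  (forall i j k, (qx i j k, qy i j k, qz i j k) != (0, 0, 0)) ->
  (forall i j k, (rx i j k, ry i j k, rz i j k) != (0, 0, 0)) ->
  (forall i j k, (sx i j k, sy i j k, sz i j k) != (0, 0, 0)) ->
  (forall i j k, 0 < rho i j k) ->
  (forall i j k, spd (S i j k)) ->
  (* Q is differentiable in time *)
  (forall (t : R) i j k c, derivable (fun s : R => Q s i j k c 0) t 1) ->
  (* Q solves the semi-discrete scheme *)
  (forall t i j k,
     Ptinv (J i j k) (rho i j k) (S i j k)
       *m (\col_c derive1 (fun s : R => Q s i j k c 0) t)
     = rhs hq hr hs Dpq Dmq Dpr Dmr Dps Dms J qx qy qz rx ry rz sx sy sz (Q t) i j k) ->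
  forall t : R, is_derive t 1 (fun s : R => energy hq hr hs J rho S (Q s)) 0.
Proof.
move=> _ _ _ sbp_q sbp_r sbp_s _ q_neq0 r_neq0 s_neq0 _ S_spd Q_derivable Q_scheme t.
have S_sym i j k : (S i j k)^T = S i j k by case: (S_spd i j k).
have dQ_spec i j k c : is_derive t 1 (fun s => Q s i j k c 0)
    ((\col_c derive1 (fun s : R => Q s i j k c 0) t) c 0).
  by rewrite mxE derive1E; exact: derivableP (Q_derivable t i j k c).
refine (is_derive_eq (is_derive_energy hq hr hs J rho S_sym dQ_spec) _).
under eq_bigr do under eq_bigr do under eq_bigr do rewrite Q_scheme.
exact: rhs_energy_neutral.
Qed.
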